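(* Assume $V=L$. Let $\xi_0,\xi_1,\xi_2,\dots\in\Xi$, let $\vartheta=\bigcup_n\xi_n$, and let $X_n\in\mathrm{IPS}_{\xi_n}$ ($n<\omega$) satisfy the coherence condition $X_n\restriction(\xi_k\cap\xi_n)=X_k\restriction(\xi_k\cap\xi_n)$ for all $k,n$. Then $X=\bigcap_n(X_n\uparrow\vartheta)$ belongs to $\mathrm{IPS}_\vartheta$ and $X\restriction\xi_n=X_n$ for all $n$. In particular, if the sets $\xi_0,\xi_1,\dots$ are pairwise disjoint, then the coherence condition holds automatically, so $X=\bigcap_n(X_n\uparrow\vartheta)\in\mathrm{IPS}_\vartheta$ and $X\restriction\xi_n=X_n$ for all $n$.
   Context: $T$ is the set of all nonempty finite sequences of countable ordinals, ordered by strict extension $\subset$. $\Xi$ is the set of all at most countable $\xi\subseteq T$ closed downward under $\subset$. $D=2^\omega$; $D^\xi$ is the product of $\xi$ copies of $D$ (with $D^\varnothing=\{\varnothing\}$). For $\eta\subseteq\xi$ in $\Xi$: $x\restriction\eta$ is restriction of $x\in D^\xi$, $X\restriction\eta=\{x\restriction\eta:x\in X\}$, and $Y\uparrow\xi=\{x\in D^\xi:x\restriction\eta\in Y\}$ for $Y\subseteq D^\eta$. For $\zeta\in\Xi$, $\mathrm{IPS}_\zeta$ is the set of all $X\subseteq D^\zeta$ for which there is a homeomorphism $H$ of $D^\zeta$ onto $X$ such that for all $x_0,x_1\in D^\zeta$ and all $\xi\in\Xi$, $\xi\subseteq\zeta$: $x_0\restriction\xi=x_1\restriction\xi\iff H(x_0)\restriction\xi=H(x_1)\restriction\xi$.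 *)

From Stdlib Require Import List ClassicalEpsilon.
Import ListNotations.

(** * Countable ordinals
    A countable ordinal is the isomorphism class of a (strict) well-order
    on a subset of nat (the empty order gives 0, finite orders give finite
    ordinals). *)
Record WO := {
  wo_dom : nat -> Prop;
  wo_rel : nat -> nat -> Prop;
  wo_field : forall a b, wo_rel a b -> wo_dom a /\ wo_dom b;
  wo_irrefl : forall a, ~ wo_rel a a;
  wo_trans : forall a b c, wo_rel a b -> wo_rel b c -> wo_rel a c;
  wo_total : forall a b, wo_dom a -> wo_dom b -> a = b \/ wo_rel a b \/ wo_rel b a;
  wo_wf : well_founded wo_rel }.

Definition wo_iso (w w' : WO) : Prop :=
  exists f : nat -> nat,
    (forall a, wo_dom w a -> wo_dom w' (f a)) /\
    (forall a b, wo_dom w a -> wo_dom w b -> f a = f b -> a = b) /\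
    (forall b, wo_dom w' b -> exists a, wo_dom w a /\ f a = b) /\
    (forall a b, wo_dom w a -> wo_dom w b -> (wo_rel w a b <-> wo_rel w' (f a) (f b))).

Definition Ord : Type := { C : WO -> Prop | exists w, forall w', C w' <-> wo_iso w w' }.

Definition T : Type := { s : list Ord | s <> [] }.

Definition ext_lt (s t : T) : Prop :=
  exists u : list Ord, u <> [] /\ proj1_sig t = proj1_sig s ++ u.

Definition countable_set (A : T -> Prop) : Prop :=
  exists f : T -> nat, forall s t, A s -> A t -> f s = f t -> s = t.

Definition InXi (xi : T -> Prop) : Prop :=
  countable_set xi /\ (forall s t, ext_lt s t -> xi t -> xi s).

(** * D = 2^omega and D^xi
    A point of D^xi is represented by a function x : T -> D which is
    constant (= d0) outside xi; D^empty is then the singleton {fun _ => d0}. *)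
Definition D : Type := nat -> bool.
Definition d0 : D := fun _ => false.
Definition Pt : Type := T -> D.

Definition inD (z : T -> Prop) (x : Pt) : Prop := forall t, ~ z t -> x t = d0.

Definition restr (eta : T -> Prop) (x : Pt) : Pt :=
  fun t => if excluded_middle_informative (eta t) then x t else d0.

Definition restrS (X : Pt -> Prop) (eta : T -> Prop) : Pt -> Prop :=
  fun y => exists x, X x /\ y = restr eta x.

Definition upS (Y : Pt -> Prop) (eta xi : T -> Prop) : Pt -> Prop :=
  fun x => inD xi x /\ Y (restr eta x).

(** * Product topology on D^z, written out via finitely many coordinates *)
Definition agree (F : list (T * nat)) (x y : Pt) : Prop :=
  forall p, In p F -> x (fst p) (snd p) = y (fst p) (snd p).

Definition cont_on (z : T -> Prop) (H : Pt -> Pt) : Prop :=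
  forall x, inD z x -> forall F, exists G, forall x', inD z x' ->
    agree G x x' -> agree F (H x) (H x').

Definition invcont_on (z : T -> Prop) (H : Pt -> Pt) : Prop :=
  forall x, inD z x -> forall F, exists G, forall x', inD z x' ->
    agree G (H x) (H x') -> agree F x x'.

Definition homeo_onto (z : T -> Prop) (H : Pt -> Pt) (X : Pt -> Prop) : Prop :=
  (forall x, inD z x -> inD z (H x)) /\
  (forall y, X y <-> exists x, inD z x /\ y = H x) /\
  (forall x x', inD z x -> inD z x' -> H x = H x' -> x = x') /\
  cont_on z H /\ invcont_on z H.

Definition IPS (z : T -> Prop) (X : Pt -> Prop) : Prop :=
  exists H : Pt -> Pt, homeo_onto z H X /\
    forall x0 x1, inD z x0 -> inD z x1 ->
      forall xi, InXi xi -> (forall t, xi t -> z t) ->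
        (restr xi x0 = restr xi x1 <-> restr xi (H x0) = restr xi (H x1)).

Definition interS (a b : T -> Prop) : T -> Prop := fun t => a t /\ b t.

(* Fix homeomorphisms [phi n] witnessing [Xs n] in IPS_(xi n). Since [phi n] preserves and
   reflects agreement on every downward closed set, a point of [Xs n] restricted to the nodes
   below t is determined by its values strictly below t together with one free coordinate
   in D.  Reading that coordinate off [y t], for any n with t in [xi n] (coherence makes the
   choice irrelevant), defines by well-founded recursion on the tree a map
   K : D^theta -> D^theta which is a bijection onto X, preserves restrictions and is
   continuous; as D^theta is compact, its inverse is continuous too. *)

From Stdlib Require Import List ClassicalEpsilon Classical FunctionalExtensionality
  PropExtensionality ProofIrrelevance Lia Wf_nat Cantor.
Import ListNotations.

Lemma restr_in (a : T -> Prop) x t : a t -> restr a x t = x t.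
Proof. intro h; unfold restr; destruct (excluded_middle_informative (a t)); tauto. Qed.

Lemma restr_notin (a : T -> Prop) x t : ~ a t -> restr a x t = d0.
Proof. intro h; unfold restr; destruct (excluded_middle_informative (a t)); tauto. Qed.

Lemma restr_inD (a : T -> Prop) x : inD a (restr a x).
Proof. intros t h; now apply restr_notin. Qed.

Lemma restr_ext (a : T -> Prop) x y : (forall t, a t -> x t = y t) -> restr a x = restr a y.
Proof.
  intro h; extensionality t; destruct (classic (a t)).
  - rewrite !restr_in; auto.
  - now rewrite !restr_notin.
Qed.

Lemma restr_eq_at (a : T -> Prop) x y t : restr a x = restr a y -> a t -> x t = y t.
Proof. intros h ht. now rewrite <- (restr_in a x t ht), <- (restr_in a y t ht), h. Qed.

Lemma inD_ext (a : T -> Prop) x y : inD a x -> inD a y -> (forall t, a t -> x t = y t) -> x = y.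
Proof.
  intros hx hy h. extensionality t. destruct (classic (a t)); auto. rewrite hx, hy; auto.
Qed.

Lemma restr_id (a : T -> Prop) x : inD a x -> restr a x = x.
Proof. intro h. apply (inD_ext a); auto using restr_inD, restr_in. Qed.

Lemma restr_restr (a b : T -> Prop) x :
  (forall t, b t -> a t) -> restr b (restr a x) = restr b x.
Proof. intro h. apply restr_ext. intros t ht. apply restr_in; auto. Qed.

Lemma inD_sub (a b : T -> Prop) x : (forall t, a t -> b t) -> inD a x -> inD b x.
Proof. intros h hx t ht. apply hx. intro; apply ht; auto. Qed.

Lemma restrS_restrS (A : Pt -> Prop) (a b : T -> Prop) :
  (forall t, b t -> a t) -> restrS (restrS A a) b = restrS A b.
Proof.
  intro h. extensionality y. apply propositional_extensionality. split.
  - intros [x [[x' [hx' ->]] ->]]. exists x'. split; auto. now apply restr_restr.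
  - intros [x [hx ->]]. exists (restr a x). split; [now exists x|]. now rewrite restr_restr.
Qed.

Lemma restrS_empty (A : Pt -> Prop) (a : T -> Prop) :
  (forall t, ~ a t) -> (exists x, A x) -> restrS A a = fun y => y = fun _ => d0.
Proof.
  intros ha [x hx]. extensionality y. apply propositional_extensionality. split.
  - intros [x' [_ ->]]. extensionality t. now apply restr_notin.
  - intros ->. exists x. split; auto. extensionality t. symmetry. now apply restr_notin.
Qed.

Lemma agree_app G1 G2 x y : agree (G1 ++ G2) x y <-> agree G1 x y /\ agree G2 x y.
Proof.
  unfold agree; split.
  - intro h; split; intros p hp; apply h; apply in_or_app; auto.
  - intros [h1 h2] p hp; apply in_app_or in hp; destruct hp; auto.
Qed.

Lemma agree_restr G (a : T -> Prop) x y : agree G x y -> agree G (restr a x) (restr a y).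
Proof.
  intros h [t i] hp. simpl. destruct (classic (a t)).
  - rewrite !restr_in by auto. exact (h (t, i) hp).
  - now rewrite !restr_notin.
Qed.

Lemma agree_finite (y : Pt) (F : list (T * nat)) (P : T * nat -> Pt -> Prop) :
  (forall c, In c F -> exists G, forall y', agree G y y' -> P c y') ->
  exists G, forall y', agree G y y' -> forall c, In c F -> P c y'.
Proof.
  induction F as [|c F IH]; intro h.
  - exists []. intros y' _ c [].
  - destruct (h c (or_introl eq_refl)) as [G1 h1].
    destruct IH as [G2 h2]; [intros; apply h; now right|].
    exists (G1 ++ G2). intros y' [ha1 ha2]%agree_app c' [<-|hc]; auto.
Qed.

Definition down_lt (t : T) : T -> Prop := fun s => ext_lt s t.
Definition down_le (t : T) : T -> Prop := fun s => ext_lt s t \/ s = t.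
Definition down_closed (z : T -> Prop) : Prop := forall s t, ext_lt s t -> z t -> z s.

Definition len (t : T) : nat := length (proj1_sig t).

Lemma ext_lt_len s t : ext_lt s t -> len s < len t.
Proof.
  intros [u [hu e]]. unfold len. rewrite e, length_app.
  destruct u; [congruence|simpl; lia].
Qed.

Lemma ext_lt_trans r s t : ext_lt r s -> ext_lt s t -> ext_lt r t.
Proof.
  intros [u [hu e]] [v [hv f]]. exists (u ++ v). split.
  - destruct u; simpl; congruence.
  - now rewrite f, e, app_assoc.
Qed.

Lemma ext_lt_irrefl t : ~ ext_lt t t.
Proof. intros h%ext_lt_len. lia. Qed.

Lemma ext_lt_wf : well_founded ext_lt.
Proof. exact (well_founded_lt_compat T len ext_lt ext_lt_len). Qed.

Lemma down_le_refl t : down_le t t.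
Proof. now right. Qed.

Lemma down_lt_le t s : down_lt t s -> down_le t s.
Proof. now left. Qed.

Lemma down_le_trans t s r : down_le t s -> down_le s r -> down_le t r.
Proof. intros [h| ->] [h'| ->]; unfold down_le; eauto using ext_lt_trans. Qed.

Lemma down_lt_le_trans t s r : down_lt t s -> down_le s r -> down_lt t r.
Proof. intros h [h'| ->]; [exact (ext_lt_trans _ _ _ h' h)|exact h]. Qed.

Lemma down_closed_le (z : T -> Prop) t s : down_closed z -> z t -> down_le t s -> z s.
Proof. intros h ht [hs| ->]; eauto. Qed.

Lemma down_le_len_inj t s s' : down_le t s -> down_le t s' -> len s = len s' -> s = s'.
Proof.
  assert (prefix : forall r, down_le t r ->
            firstn (len r) (proj1_sig t) = proj1_sig r).
  { intros r [[u [_ e]]| ->]; [rewrite e|]; unfold len;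
      now rewrite ?firstn_app, ?PeanoNat.Nat.sub_diag, ?firstn_O, ?app_nil_r, firstn_all. }
  intros hs hs' hl. destruct s as [s ns], s' as [s' ns'].
  pose proof (prefix _ hs) as e; pose proof (prefix _ hs') as e'; simpl in *.
  assert (s = s') as <- by (rewrite <- e, <- e'; now f_equal).
  f_equal. apply proof_irrelevance.
Qed.

Lemma InXi_down_le t : InXi (down_le t).
Proof.
  split.
  - exists len. intros s s' hs hs'. now apply down_le_len_inj with t.
  - intros r s h hs. eapply down_le_trans; [exact hs|now left].
Qed.

Lemma InXi_down_lt t : InXi (down_lt t).
Proof.
  split.
  - exists len. intros s s' hs hs'. apply down_le_len_inj with t; now left.
  - intros r s h hs. eapply ext_lt_trans; eauto.
Qed.

Section BoolSeqCluster.
Variable a : nat -> nat -> bool.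

Definition frequent (p : nat -> bool) (k : nat) : Prop :=
  forall N, exists m, N <= m /\ forall j, j < k -> a m j = p j.

Definition set_bit (p : nat -> bool) (k : nat) (v : bool) : nat -> bool :=
  fun j => if PeanoNat.Nat.eqb j k then v else p j.

Definition extend_frequent (p : nat -> bool) (k : nat) : nat -> bool :=
  if excluded_middle_informative (frequent (set_bit p k false) (S k))
  then set_bit p k false else set_bit p k true.

Fixpoint frequent_prefix (k : nat) : nat -> bool :=
  match k with
  | 0 => fun _ => false
  | S k => extend_frequent (frequent_prefix k) k
  end.

Lemma extend_frequentP p k : frequent p k -> frequent (extend_frequent p k) (S k).
Proof.
  intro h. unfold extend_frequent.
  destruct (excluded_middle_informative _) as [h0|h0]; auto.
  apply not_all_ex_not in h0 as [N0 h0]. intro N.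
  destruct (h (max N N0)) as [m [hm hj]].
  exists m. split; [lia|]. intros j hjk. unfold set_bit.
  destruct (PeanoNat.Nat.eqb_spec j k) as [->|]; [|apply hj; lia].
  destruct (a m k) eqn:E; auto. exfalso. apply h0. exists m. split; [lia|].
  intros j hj'. unfold set_bit. destruct (PeanoNat.Nat.eqb_spec j k) as [->|]; auto.
  apply hj; lia.
Qed.

Lemma frequent_prefixP k : frequent (frequent_prefix k) k.
Proof.
  induction k as [|k IH]; [|now apply extend_frequentP].
  intro N. exists N. split; [lia|]. intros; lia.
Qed.

Lemma frequent_prefix_stable k j : j < k -> frequent_prefix k j = frequent_prefix (S j) j.
Proof.
  induction k as [|k IH]; intro h; [lia|].
  destruct (PeanoNat.Nat.eq_dec j k) as [->|hjk]; auto.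
  simpl. unfold extend_frequent, set_bit.
  destruct (excluded_middle_informative _); destruct (PeanoNat.Nat.eqb_spec j k);
    (lia || apply IH; lia).
Qed.

Lemma bool_seq_cluster :
  exists b : nat -> bool, forall k N, exists m, N <= m /\ forall j, j < k -> a m j = b j.
Proof.
  exists (fun j => frequent_prefix (S j) j). intros k N.
  destruct (frequent_prefixP k N) as [m [hm hj]].
  exists m. split; auto. intros j hjk. rewrite hj by exact hjk.
  now apply frequent_prefix_stable.
Qed.
End BoolSeqCluster.

Lemma countable_set_enum (z : T -> Prop) t0 :
  countable_set z -> z t0 -> exists (g : T -> nat) (e : nat -> T), forall t, z t -> e (g t) = t.
Proof.
  intros [g hg] ht0. exists g, (fun k => epsilon (inhabits t0) (fun t => z t /\ g t = k)).
  intros t ht. destruct (epsilon_spec (inhabits t0) (fun s => z s /\ g s = g t)) as [h1 h2].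
  - now exists t.
  - now apply hg.
Qed.

Lemma countable_set_union (zs : nat -> T -> Prop) :
  (forall n, countable_set (zs n)) -> countable_set (fun t => exists n, zs n t).
Proof.
  intro hc. destruct (choice _ hc) as [g hg].
  set (idx := fun t => epsilon (inhabits 0) (fun n => zs n t)).
  assert (hidx : forall t, (exists n, zs n t) -> zs (idx t) t) by (intros; now apply epsilon_spec).
  exists (fun t => to_nat (idx t, g (idx t) t)).
  intros s t hs ht e. apply (f_equal of_nat) in e. rewrite !cancel_of_to in e.
  injection e as e1 e2. rewrite e1 in e2.
  apply (hg (idx t)); auto.
  rewrite <- e1. auto.
Qed.

Lemma exhausting_grid (z : T -> Prop) :
  countable_set z -> exists grid : nat -> list (T * nat),
    forall t i, z t -> exists M, forall m, M <= m -> In (t, i) (grid m).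
Proof.
  intro hz. destruct (classic (exists t0, z t0)) as [[t0 ht0]|hempty].
  - destruct (countable_set_enum z t0 hz ht0) as [g [e he]].
    exists (fun m => flat_map (fun k => map (fun i => (e k, i)) (seq 0 m)) (seq 0 m)).
    intros t i ht. exists (S (max (g t) i)). intros m hm.
    apply in_flat_map. exists (g t). split; [apply in_seq; lia|].
    apply in_map_iff. exists i. rewrite he by exact ht. split; [reflexivity|apply in_seq; lia].
  - exists (fun _ => []). intros t i ht. exfalso. eauto.
Qed.

Lemma inD_seq_cluster (z : T -> Prop) (xs : nat -> Pt) :
  countable_set z -> (forall m, inD z (xs m)) ->
  exists x, inD z x /\ forall L N, exists m, N <= m /\ agree L (xs m) x.
Proof.
  intros hz hxs. destruct (classic (exists t0, z t0)) as [[t0 ht0]|hempty].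
  2:{ exists (fun _ => d0). split; [intros t _; reflexivity|].
      intros L N. exists N. split; [lia|]. intros [t i] _. simpl.
      rewrite hxs; [reflexivity|]. intro ht. eauto. }
  destruct (countable_set_enum z t0 hz ht0) as [g [e he]].
  destruct (bool_seq_cluster (fun m c => xs m (e (fst (of_nat c))) (snd (of_nat c))))
    as [b hb].
  exists (restr z (fun t i => b (to_nat (g t, i)))). split; [apply restr_inD|].
  intros L N.
  destruct (hb (S (list_max (map (fun p => to_nat (g (fst p), snd p)) L))) N) as [m [hm hj]].
  exists m. split; [exact hm|]. intros [t i] hin. cbn [fst snd].
  destruct (classic (z t)) as [ht|ht].
  - rewrite restr_in by exact ht. rewrite <- hj.
    + rewrite cancel_of_to. cbn [fst snd]. now rewrite he.
    + apply PeanoNat.Nat.lt_succ_r.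
      refine (proj1 (Forall_forall _ _) (proj1 (list_max_le _ _) (le_n _)) _ _).
      apply in_map_iff. now exists (t, i).
  - rewrite restr_notin, hxs; auto.
Qed.

Lemma invcont_of_cont_inj (z : T -> Prop) (f : Pt -> Pt) :
  countable_set z -> (forall x, inD z x -> inD z (f x)) -> cont_on z f ->
  (forall x x', inD z x -> inD z x' -> f x = f x' -> x = x') -> invcont_on z f.
Proof.
  intros hz hf hc hinj x hx F. apply NNPP; intro hno.
  (* Otherwise points [xs m] with [f (xs m)] ever closer to [f x] but [xs m] far from [x]
     have a cluster point [x'] with [f x' = f x] and [x' <> x]. *)
  assert (hbad : forall G, exists x', inD z x' /\ agree G (f x) (f x') /\ ~ agree F x x').
  { intro G. apply NNPP; intro h. apply hno. exists G. intros x' hx' ha.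
    apply NNPP; intro hF. apply h. eauto. }
  destruct (exhausting_grid z hz) as [grid hgrid].
  destruct (choice _ (fun m => hbad (grid m))) as [xs hxs].
  destruct (inD_seq_cluster z xs hz (fun m => proj1 (hxs m))) as [x' [hx' hcl]].
  assert (hfx : f x' = f x).
  { apply (inD_ext z); auto. intros t ht. extensionality i.
    destruct (hc x' hx' [(t, i)]) as [G hG].
    destruct (hgrid t i ht) as [M hM].
    destruct (hcl G M) as [m [hm hag]].
    destruct (hxs m) as [hxm [hfm _]].
    transitivity (f (xs m) t i).
    - apply (hG _ hxm (fun p hp => eq_sym (hag p hp)) (t, i)). now left.
    - symmetry. exact (hfm (t, i) (hM m hm)). }
  rewrite (hinj x' x hx' hx hfx) in hcl.
  destruct (hcl F 0) as [m [_ hag]]. destruct (hxs m) as [_ [_ hnag]].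
  apply hnag. intros p hp. symmetry. auto.
Qed.

Definition preserves_restr (z : T -> Prop) (H : Pt -> Pt) : Prop :=
  forall x0 x1, inD z x0 -> inD z x1 ->
    forall xi, InXi xi -> (forall t, xi t -> z t) ->
      (restr xi x0 = restr xi x1 <-> restr xi (H x0) = restr xi (H x1)).

Section IPSMap.
Variables (z : T -> Prop) (X : Pt -> Prop) (H : Pt -> Pt).
Hypothesis z_dc : down_closed z.
Hypothesis H_homeo : homeo_onto z H X.
Hypothesis H_pres : preserves_restr z H.

Lemma ips_inD a : inD z a -> inD z (H a).
Proof. apply H_homeo. Qed.

Lemma ips_cont : cont_on z H.
Proof. apply H_homeo. Qed.

Lemma ips_image a : inD z a -> X (H a).
Proof. intro ha. apply H_homeo. eauto. Qed.

Lemma ips_preimage x : X x -> exists a, inD z a /\ x = H a.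
Proof. apply H_homeo. Qed.

Lemma ips_restr_down_le r a b : z r -> inD z a -> inD z b ->
  (restr (down_le r) a = restr (down_le r) b <->
   restr (down_le r) (H a) = restr (down_le r) (H b)).
Proof.
  intros hr ha hb. apply H_pres; auto using InXi_down_le.
  intros t ht. now apply (down_closed_le z r).
Qed.

Lemma ips_eq_at r a b : z r -> inD z a -> inD z b ->
  restr (down_le r) (H a) = restr (down_le r) (H b) -> a r = b r.
Proof.
  intros hr ha hb e. apply (ips_restr_down_le r a b hr ha hb) in e.
  exact (restr_eq_at _ _ _ r e (down_le_refl r)).
Qed.

(* Local preimages under H are unique on [down_le s] by [ips_eq_at], so they glue. *)
Lemma ips_restrS_of_local (xi : T -> Prop) (x : Pt) :
  down_closed xi -> (forall t, xi t -> z t) -> inD xi x ->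
  (forall s, xi s -> restrS X (down_le s) (restr (down_le s) x)) -> restrS X xi x.
Proof.
  intros xi_dc xi_z hx hloc.
  assert (hA : forall s, exists a, xi s -> inD z a /\
                 restr (down_le s) (H a) = restr (down_le s) x).
  { intro s. destruct (classic (xi s)) as [hs|hs]; [|now exists x].
    destruct (hloc s hs) as [x0 [[a [ha ->]]%ips_preimage e]]. eauto. }
  destruct (choice _ hA) as [A hA'].
  set (w := restr xi (fun t => A t t)).
  assert (hw : inD z w) by (apply (inD_sub xi); auto; apply restr_inD).
  assert (hwA : forall s, xi s -> restr (down_le s) w = restr (down_le s) (A s)).
  { intros s hs. apply restr_ext. intros r hr.
    assert (hr' : xi r) by (eapply down_closed_le; eauto).
    unfold w. rewrite restr_in by exact hr'.
    destruct (hA' r hr') as [har er], (hA' s hs) as [has es].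
    apply (ips_eq_at r); auto.
    rewrite er, <- (restr_restr (down_le s) (down_le r) x), <- es, restr_restr; auto;
      intros; eapply down_le_trans; eauto. }
  exists (H w). split; [now apply ips_image|].
  apply (inD_ext xi); auto using restr_inD. intros t ht.
  rewrite restr_in by exact ht. destruct (hA' t ht) as [hat et].
  apply (ips_restr_down_le t w (A t)) in hwA; auto.
  apply (restr_eq_at (down_le t)) with (t := t) in et; [|apply down_le_refl].
  rewrite <- et. symmetry. eapply restr_eq_at; [exact hwA|apply down_le_refl].
Qed.

Lemma ips_restr_invcont (S : T -> Prop) :
  InXi S -> (forall t, S t -> z t) -> invcont_on S (fun w => restr S (H w)).
Proof.
  intros hS hSz. assert (hsub : forall w, inD S w -> inD z w) by (intro; now apply inD_sub).
  apply invcont_of_cont_inj; [apply hS|intros; apply restr_inD| |].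
  - intros w hw F. destruct (ips_cont w (hsub w hw) F) as [G hG].
    exists G. intros w' hw' ha. apply agree_restr. apply hG; auto.
  - intros a b ha hb e. apply H_pres in e; auto.
    now rewrite !restr_id in e.
Qed.
End IPSMap.

Lemma restrS_self (A : Pt -> Prop) (a : T -> Prop) x :
  (forall x', A x' -> inD a x') -> restrS A a x -> A x.
Proof. intros hA [x' [hx' ->]]. now rewrite restr_id by auto. Qed.

Lemma IPS_nonempty (z : T -> Prop) (A : Pt -> Prop) : IPS z A -> exists x, A x.
Proof.
  intros [H [hH _]]. exists (H (fun _ => d0)). apply (ips_image z A H hH).
  intros t _. reflexivity.
Qed.

Definition coord_cont (f : Pt -> Pt) (t : T) : Prop :=
  forall y i, exists G, forall y', agree G y y' -> f y t i = f y' t i.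

Lemma restr_coord_cont (f : Pt -> Pt) (S : T -> Prop) :
  (forall s, S s -> coord_cont f s) ->
  forall y F, exists G, forall y', agree G y y' -> agree F (restr S (f y)) (restr S (f y')).
Proof.
  intros hf y F. apply agree_finite. intros [s i] _. cbn [fst snd].
  destruct (classic (S s)) as [hs|hs].
  - destruct (hf s hs y i) as [G hG]. exists G. intros y' ha. rewrite !restr_in by exact hs. auto.
  - exists []. intros. now rewrite !restr_notin.
Qed.

Lemma cont_on_of_coord_cont (z : T -> Prop) (f : Pt -> Pt) :
  (forall t, coord_cont f t) -> cont_on z f.
Proof.
  intros hf y _ F. destruct (agree_finite y F (fun c y' => f y (fst c) (snd c) = f y' (fst c) (snd c)))
    as [G hG]; [intros [t i] _; apply hf|].
  exists G. intros y' _ ha. exact (hG y' ha).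
Qed.

Definition tree_rec (F : T -> Pt -> D) : Pt :=
  Fix ext_lt_wf (fun _ => D) (fun t rec =>
    F t (fun s => match excluded_middle_informative (ext_lt s t) with
                  | left h => rec s h
                  | right _ => d0
                  end)).

Lemma tree_rec_eq F t : tree_rec F t = F t (restr (down_lt t) (tree_rec F)).
Proof.
  unfold tree_rec at 1. rewrite Fix_eq; [reflexivity|].
  intros t' f g hfg. f_equal. extensionality s. now destruct (excluded_middle_informative _).
Qed.

Definition set_at (w : Pt) (t : T) (d : D) : Pt :=
  fun s => if excluded_middle_informative (s = t) then d else w s.

Lemma set_at_eq w t d : set_at w t d t = d.
Proof. unfold set_at. now destruct (excluded_middle_informative _). Qed.

Lemma set_at_neq w t d s : s <> t -> set_at w t d s = w s.
Proof. unfold set_at. now destruct (excluded_middle_informative _). Qed.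

Lemma restr_down_lt_set_at w t d : restr (down_lt t) (set_at w t d) = restr (down_lt t) w.
Proof.
  apply restr_ext. intros s hs. apply set_at_neq. intros ->. exact (ext_lt_irrefl t hs).
Qed.

Lemma set_at_inD w t d : inD (down_lt t) w -> inD (down_le t) (set_at w t d).
Proof.
  intros hw s hs. rewrite set_at_neq by (intros ->; apply hs, down_le_refl).
  apply hw. intro; now apply hs, down_lt_le.
Qed.

Section Gluing.
Variables (xi : nat -> T -> Prop) (Xs : nat -> Pt -> Prop) (phi : nat -> Pt -> Pt).
Hypothesis xi_Xi : forall n, InXi (xi n).
Hypothesis phi_homeo : forall n, homeo_onto (xi n) (phi n) (Xs n).
Hypothesis phi_pres : forall n, preserves_restr (xi n) (phi n).
Hypothesis coherent : forall k n,
  restrS (Xs n) (interS (xi k) (xi n)) = restrS (Xs k) (interS (xi k) (xi n)).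

Definition theta : T -> Prop := fun t => exists n, xi n t.
Definition Xglued : Pt -> Prop := fun x => forall n, upS (Xs n) (xi n) theta x.

Lemma xi_down_le n t : xi n t -> forall s, down_le t s -> xi n s.
Proof. intros ht s. apply down_closed_le; auto. exact (proj2 (xi_Xi n)). Qed.

Lemma xi_down_lt n t : xi n t -> forall s, down_lt t s -> xi n s.
Proof. intros ht s hs. now apply (xi_down_le n t), down_lt_le. Qed.

Lemma theta_Xi : InXi theta.
Proof.
  split.
  - apply countable_set_union. intro n. exact (proj1 (xi_Xi n)).
  - intros s t hst [n hn]. exists n. now apply (xi_down_lt n t).
Qed.

Lemma Xs_down_le_coherent m n t :
  xi m t -> xi n t -> restrS (Xs m) (down_le t) = restrS (Xs n) (down_le t).
Proof.
  intros hm hn. assert (hsub : forall s, down_le t s -> interS (xi n) (xi m) s).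
  { intros s hs. split; [now apply (xi_down_le n t)|now apply (xi_down_le m t)]. }
  now rewrite <- (restrS_restrS (Xs m) _ _ hsub), <- (restrS_restrS (Xs n) _ _ hsub), coherent.
Qed.

Lemma phi_restr_iff n (S : T -> Prop) a b :
  InXi S -> (forall s, S s -> xi n s) -> inD (xi n) a -> inD (xi n) b ->
  (restr S a = restr S b <-> restr S (phi n a) = restr S (phi n b)).
Proof. intros hS hsub ha hb. now apply phi_pres. Qed.

Lemma set_at_inD_xi n w t d : xi n t -> inD (down_lt t) w -> inD (xi n) (set_at w t d).
Proof. intros ht hw. apply (inD_sub (down_le t)); [apply xi_down_le, ht|now apply set_at_inD]. Qed.

Definition idx (t : T) : nat := epsilon (inhabits 0) (fun n => xi n t).

Lemma idx_spec t : theta t -> xi (idx t) t.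
Proof. exact (epsilon_spec _ (fun n => xi n t)). Qed.

Definition lift_lt (p : Pt) (t : T) : Pt :=
  epsilon (inhabits p) (fun w => inD (down_lt t) w /\
                                 restr (down_lt t) (phi (idx t) w) = restr (down_lt t) p).

Lemma lift_lt_spec p t :
  (exists w, inD (down_lt t) w /\ restr (down_lt t) (phi (idx t) w) = restr (down_lt t) p) ->
  inD (down_lt t) (lift_lt p t) /\
  restr (down_lt t) (phi (idx t) (lift_lt p t)) = restr (down_lt t) p.
Proof. exact (epsilon_spec _ _). Qed.

Definition K (y : Pt) : Pt :=
  tree_rec (fun t p => if excluded_middle_informative (theta t)
                       then phi (idx t) (set_at (lift_lt p t) t (y t)) t else d0).

Definition K_lift (y : Pt) (t : T) : Pt := lift_lt (restr (down_lt t) (K y)) t.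

Lemma K_eq y t :
  K y t = if excluded_middle_informative (theta t)
          then phi (idx t) (set_at (K_lift y t) t (y t)) t else d0.
Proof. unfold K at 1. now rewrite tree_rec_eq. Qed.

Lemma K_inD y : inD theta (K y).
Proof. intros t ht. rewrite K_eq. now destruct (excluded_middle_informative _). Qed.

Lemma K_local t : forall y y', (forall s, down_le t s -> y s = y' s) -> K y t = K y' t.
Proof.
  induction t as [t IH] using (well_founded_ind ext_lt_wf). intros y y' h.
  rewrite !K_eq. destruct (excluded_middle_informative _); [|reflexivity].
  unfold K_lift. rewrite (h t (down_le_refl t)).
  replace (restr (down_lt t) (K y)) with (restr (down_lt t) (K y')); [reflexivity|].
  apply restr_ext. intros s hs. symmetry. apply IH; [exact hs|].
  intros r hr. apply h. now apply down_lt_le, (down_lt_le_trans t s).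
Qed.

Lemma K_lift_spec_of y t : theta t ->
  restrS (Xs (idx t)) (down_lt t) (restr (down_lt t) (K y)) ->
  inD (down_lt t) (K_lift y t) /\
  restr (down_lt t) (phi (idx t) (K_lift y t)) = restr (down_lt t) (K y).
Proof.
  intros ht [x0 [hx0 e]]. pose proof (idx_spec t ht) as hn.
  rewrite <- (restr_restr (down_lt t) (down_lt t) (K y)) by auto.
  apply lift_lt_spec.
  destruct (ips_preimage _ _ _ (phi_homeo (idx t)) x0 hx0) as [a [ha ->]].
  exists (restr (down_lt t) a). split; [apply restr_inD|].
  rewrite e, restr_restr by auto.
  apply phi_restr_iff; [apply InXi_down_lt|apply xi_down_lt, hn| |exact ha|].
  - apply (inD_sub (down_lt t)); [apply xi_down_lt, hn|apply restr_inD].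
  - now apply restr_restr.
Qed.

Lemma K_down_le_of y t : theta t ->
  restrS (Xs (idx t)) (down_lt t) (restr (down_lt t) (K y)) ->
  restr (down_le t) (K y) = restr (down_le t) (phi (idx t) (set_at (K_lift y t) t (y t))).
Proof.
  intros ht hpre. pose proof (idx_spec t ht) as hn.
  destruct (K_lift_spec_of y t ht hpre) as [hw e].
  apply restr_ext. intros s [hs| ->].
  - rewrite <- (restr_in (down_lt t) (K y) s hs), <- e, restr_in by exact hs.
    apply (restr_eq_at (down_lt t)); [|exact hs].
    apply phi_restr_iff; [apply InXi_down_lt|apply xi_down_lt, hn| | |].
    + now apply (inD_sub (down_lt t)); [apply xi_down_lt|].
    + now apply set_at_inD_xi.
    + now rewrite restr_down_lt_set_at.
  - rewrite K_eq. now destruct (excluded_middle_informative _).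
Qed.

Lemma K_down_lt_in_of y t : theta t ->
  (forall s, down_lt t s -> restrS (Xs (idx s)) (down_le s) (restr (down_le s) (K y))) ->
  restrS (Xs (idx t)) (down_lt t) (restr (down_lt t) (K y)).
Proof.
  intros ht hloc. pose proof (idx_spec t ht) as hn.
  apply (ips_restrS_of_local (xi (idx t)) (Xs (idx t)) (phi (idx t)));
    [exact (proj2 (xi_Xi _))|apply phi_homeo|apply phi_pres|exact (proj2 (InXi_down_lt t))
    |apply xi_down_lt, hn|apply restr_inD|].
  intros s hs. rewrite restr_restr by (intros; now apply (down_lt_le_trans t s)).
  assert (hs' : xi (idx t) s) by exact (xi_down_lt _ t hn s hs).
  rewrite (Xs_down_le_coherent (idx t) (idx s) s hs'); [now apply hloc|].
  apply idx_spec. now exists (idx t).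
Qed.

Lemma K_down_le_in y t : theta t -> restrS (Xs (idx t)) (down_le t) (restr (down_le t) (K y)).
Proof.
  induction t as [t IH] using (well_founded_ind ext_lt_wf). intro ht.
  assert (hpre := K_down_lt_in_of y t ht
                    (fun s hs => IH s hs (proj2 theta_Xi s t hs ht))).
  rewrite (K_down_le_of y t ht hpre).
  exists (phi (idx t) (set_at (K_lift y t) t (y t))). split; [|reflexivity].
  apply (ips_image _ _ _ (phi_homeo _)), set_at_inD_xi; [now apply idx_spec|].
  apply (K_lift_spec_of y t ht hpre).
Qed.

Lemma K_down_lt_in y t : theta t -> restrS (Xs (idx t)) (down_lt t) (restr (down_lt t) (K y)).
Proof.
  intro ht. apply K_down_lt_in_of; [exact ht|]. intros s hs. apply K_down_le_in.
  exact (proj2 theta_Xi s t hs ht).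
Qed.

Lemma K_lift_spec y t : theta t ->
  inD (down_lt t) (K_lift y t) /\
  restr (down_lt t) (phi (idx t) (K_lift y t)) = restr (down_lt t) (K y).
Proof. intro ht. exact (K_lift_spec_of y t ht (K_down_lt_in y t ht)). Qed.

Lemma K_down_le y t : theta t ->
  restr (down_le t) (K y) = restr (down_le t) (phi (idx t) (set_at (K_lift y t) t (y t))).
Proof. intro ht. exact (K_down_le_of y t ht (K_down_lt_in y t ht)). Qed.

Lemma K_inj_at t y y' : theta t ->
  restr (down_le t) (K y) = restr (down_le t) (K y') -> y t = y' t.
Proof.
  intros ht e. pose proof (idx_spec t ht) as hn.
  assert (hlift : K_lift y t = K_lift y' t).
  { unfold K_lift. f_equal.
    now rewrite <- (restr_restr (down_le t) (down_lt t) (K y)), e, restr_restr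
      by (intros; now apply down_lt_le). }
  rewrite (K_down_le y t ht), (K_down_le y' t ht), hlift in e.
  rewrite <- (set_at_eq (K_lift y' t) t (y t)), <- (set_at_eq (K_lift y' t) t (y' t)).
  pose proof (proj1 (K_lift_spec y' t ht)) as hw.
  apply (ips_eq_at (xi (idx t)) (phi (idx t))); auto using set_at_inD_xi.
  exact (proj2 (xi_Xi _)).
Qed.

Lemma K_preserves : preserves_restr theta K.
Proof.
  intros y y' _ _ z [_ z_dc] z_theta. split; intro e; apply restr_ext; intros t ht.
  - apply K_local. intros s hs. apply (restr_eq_at z y y' s e). now apply (down_closed_le z t).
  - apply (K_inj_at t); [now apply z_theta|]. apply restr_ext. intros s hs.
    apply (restr_eq_at z _ _ s e). now apply (down_closed_le z t).
Qed.

Lemma K_inj y y' : inD theta y -> inD theta y' -> K y = K y' -> y = y'.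
Proof.
  intros hy hy' e. rewrite <- (restr_id theta y hy), <- (restr_id theta y' hy').
  apply (K_preserves y y' hy hy' theta theta_Xi); [auto|now rewrite e].
Qed.

Lemma K_in_Xglued y : Xglued (K y).
Proof.
  intro n. split; [apply K_inD|]. apply (restrS_self _ (xi n)).
  { intros x hx. destruct (ips_preimage _ _ _ (phi_homeo n) x hx) as [a [ha ->]].
    exact (ips_inD _ _ _ (phi_homeo n) a ha). }
  apply (ips_restrS_of_local (xi n) (Xs n) (phi n));
    [exact (proj2 (xi_Xi n))|apply phi_homeo|apply phi_pres|exact (proj2 (xi_Xi n))
    |auto|apply restr_inD|].
  intros s hs. rewrite restr_restr by (intros; now apply (xi_down_le n s)).
  assert (hs' : theta s) by now exists n.
  rewrite (Xs_down_le_coherent n (idx s) s hs (idx_spec s hs')). now apply K_down_le_in.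
Qed.

Lemma K_set_at_exists v x t : theta t ->
  restr (down_lt t) (K v) = restr (down_lt t) x ->
  restrS (Xs (idx t)) (down_le t) (restr (down_le t) x) ->
  exists d, K (set_at v t d) t = x t.
Proof.
  intros ht ev [x0 [hx0 ex]]. pose proof (idx_spec t ht) as hn.
  destruct (ips_preimage _ _ _ (phi_homeo _) x0 hx0) as [a [ha ->]].
  exists (a t). set (u := set_at v t (a t)).
  destruct (K_lift_spec u t ht) as [hw ew].
  assert (eu : restr (down_lt t) (K u) = restr (down_lt t) x).
  { rewrite <- ev. apply restr_ext. intros s hs. apply K_local. intros r hr.
    apply set_at_neq. intros ->. exact (ext_lt_irrefl _ (down_lt_le_trans t s t hs hr)). }
  assert (ewa : restr (down_le t) (set_at (K_lift u t) t (u t)) = restr (down_le t) a).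
  { apply restr_ext. intros s [hs| ->]; [|unfold u; now rewrite !set_at_eq].
    rewrite set_at_neq by (intros ->; exact (ext_lt_irrefl t hs)).
    apply (restr_eq_at (down_lt t)) with (t := s); [|exact hs].
    apply (phi_restr_iff (idx t)); [apply InXi_down_lt|apply xi_down_lt, hn| |exact ha|].
    - now apply (inD_sub (down_lt t)); [apply xi_down_lt|].
    - rewrite ew, eu, <- (restr_restr (down_le t) (down_lt t) x), ex, restr_restr;
        [reflexivity|intros; now apply down_lt_le..]. }
  apply (phi_restr_iff (idx t) (down_le t)) in ewa;
    [|apply InXi_down_le|apply xi_down_le, hn|now apply set_at_inD_xi|exact ha].
  rewrite <- (K_down_le u t ht) in ewa.
  rewrite (restr_eq_at _ _ _ t ewa (down_le_refl t)).
  symmetry. exact (restr_eq_at _ _ _ t ex (down_le_refl t)).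
Qed.

Section Pullback.
Variables (zeta : T -> Prop) (x : Pt).
Hypothesis zeta_dc : down_closed zeta.
Hypothesis zeta_theta : forall t, zeta t -> theta t.
Hypothesis x_local : forall t, zeta t ->
  restrS (Xs (idx t)) (down_le t) (restr (down_le t) x).

Definition pullback : Pt :=
  tree_rec (fun t p => if excluded_middle_informative (zeta t)
                       then epsilon (inhabits d0) (fun d => K (set_at p t d) t = x t)
                       else d0).

Lemma pullback_inD : inD zeta pullback.
Proof.
  intros t ht. unfold pullback. rewrite tree_rec_eq.
  now destruct (excluded_middle_informative _).
Qed.

Lemma K_pullback t : zeta t -> K pullback t = x t.
Proof.
  induction t as [t IH] using (well_founded_ind ext_lt_wf). intro ht.
  set (v := restr (down_lt t) pullback).
  assert (hpt : pullback t = epsilon (inhabits d0) (fun d => K (set_at v t d) t = x t)).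
  { unfold pullback at 1. rewrite tree_rec_eq. now destruct (excluded_middle_informative _). }
  rewrite (K_local t pullback (set_at v t (pullback t))).
  - rewrite hpt. apply (epsilon_spec (inhabits d0) (fun d => K (set_at v t d) t = x t)).
    apply K_set_at_exists; auto. apply restr_ext. intros s hs.
    rewrite <- (IH s hs (zeta_dc s t hs ht)). apply K_local. intros r hr.
    apply restr_in. exact (down_lt_le_trans t s r hs hr).
  - intros s [hs| ->]; [|now rewrite set_at_eq].
    rewrite set_at_neq by (intros ->; exact (ext_lt_irrefl t hs)).
    symmetry. now apply restr_in.
Qed.
End Pullback.

Lemma K_lift_cont t : theta t -> (forall s, down_lt t s -> coord_cont K s) ->
  forall y F, exists G, forall y', agree G y y' -> agree F (K_lift y t) (K_lift y' t).
Proof.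
  intros ht hcont y F. pose proof (idx_spec t ht) as hn.
  destruct (K_lift_spec y t ht) as [hw ew].
  destruct (ips_restr_invcont _ _ _ (phi_homeo (idx t)) (phi_pres (idx t)) (down_lt t)
              (InXi_down_lt t) (xi_down_lt _ t hn) _ hw F) as [G' hG'].
  destruct (restr_coord_cont K (down_lt t) hcont y G') as [G hG].
  exists G. intros y' ha. destruct (K_lift_spec y' t ht) as [hw' ew'].
  apply hG'; [exact hw'|]. cbv beta. rewrite ew, ew'. exact (hG y' ha).
Qed.

Lemma K_coord_cont t : coord_cont K t.
Proof.
  induction t as [t IH] using (well_founded_ind ext_lt_wf). intros y i.
  destruct (classic (theta t)) as [ht|ht].
  2:{ exists []. intros y' _. rewrite !K_eq. now destruct (excluded_middle_informative _). }
  pose proof (idx_spec t ht) as hn.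
  set (u := fun y => set_at (K_lift y t) t (y t)).
  assert (hu : forall y, inD (xi (idx t)) (u y)).
  { intro y'. apply set_at_inD_xi; [exact hn|exact (proj1 (K_lift_spec y' t ht))]. }
  destruct (ips_cont _ _ _ (phi_homeo (idx t)) (u y) (hu y) [(t, i)]) as [G1 hG1].
  destruct (K_lift_cont t ht IH y G1) as [G2 hG2].
  exists (G1 ++ G2). intros y' [ha1 ha2]%agree_app.
  rewrite !K_eq. destruct (excluded_middle_informative _); [|contradiction].
  refine (hG1 (u y') (hu y') _ (t, i) (or_introl eq_refl)).
  intros [s j] hp. unfold u, set_at. cbn [fst snd].
  destruct (excluded_middle_informative (s = t)) as [->|].
  - exact (ha1 (t, j) hp).
  - exact (hG2 y' ha2 (s, j) hp).
Qed.

Lemma K_cont : cont_on theta K.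
Proof. apply cont_on_of_coord_cont, K_coord_cont. Qed.

Lemma K_homeo : homeo_onto theta K Xglued.
Proof.
  split; [intros; apply K_inD|]. split; [|split; [exact K_inj|split; [exact K_cont|]]].
  - intro x. split; [|intros [y [_ ->]]; apply K_in_Xglued].
    intro hx. exists (pullback theta x). split; [apply pullback_inD|].
    apply (inD_ext theta); [exact (proj1 (hx 0))|apply K_inD|]. intros t ht.
    symmetry. apply K_pullback; auto; [exact (proj2 theta_Xi)|].
    intros s hs. exists (restr (xi (idx s)) x). split; [exact (proj2 (hx (idx s)))|].
    symmetry. apply restr_restr, xi_down_le, idx_spec, hs.
  - apply invcont_of_cont_inj; [exact (proj1 theta_Xi)|intros; apply K_inD|exact K_cont|exact K_inj].
Qed.

Lemma Xglued_IPS : IPS theta Xglued.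
Proof. exists K. split; [exact K_homeo|exact K_preserves]. Qed.

Lemma restrS_Xglued n : restrS Xglued (xi n) = Xs n.
Proof.
  extensionality x0. apply propositional_extensionality. split.
  - intros [x [hx ->]]. exact (proj2 (hx n)).
  - intro hx0. destruct (ips_preimage _ _ _ (phi_homeo n) x0 hx0) as [a [ha ->]].
    exists (K (pullback (xi n) (phi n a))). split; [apply K_in_Xglued|].
    apply (inD_ext (xi n)); [exact (ips_inD _ _ _ (phi_homeo n) a ha)|apply restr_inD|].
    intros t ht. rewrite restr_in by exact ht. symmetry.
    apply (K_pullback (xi n)); [exact (proj2 (xi_Xi n))|now exists n| |exact ht].
    intros s hs. rewrite <- (Xs_down_le_coherent n (idx s) s hs (idx_spec s (ex_intro _ n hs))).
    exists (phi n a). split; [exact (ips_image _ _ _ (phi_homeo n) a ha)|reflexivity].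
Qed.
End Gluing.

Lemma coherent_of_disjoint (xi : nat -> T -> Prop) (Xs : nat -> Pt -> Prop) :
  (forall n, exists x, Xs n x) -> (forall k n, k <> n -> forall t, ~ (xi k t /\ xi n t)) ->
  forall k n, restrS (Xs n) (interS (xi k) (xi n)) = restrS (Xs k) (interS (xi k) (xi n)).
Proof.
  intros hne hdisj k n. destruct (PeanoNat.Nat.eq_dec k n) as [->|hkn]; [reflexivity|].
  rewrite !restrS_empty; auto; intros t ht; exact (hdisj k n hkn t ht).
Qed.

Theorem lemma2p26 :
  forall (xi : nat -> T -> Prop) (Xs : nat -> Pt -> Prop),
    (forall n, InXi (xi n)) ->
    (forall n, IPS (xi n) (Xs n)) ->
    let theta : T -> Prop := fun t => exists n, xi n t in
    let X : Pt -> Prop := fun x => forall n, upS (Xs n) (xi n) theta x in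
    ((forall k n, restrS (Xs n) (interS (xi k) (xi n))
                  = restrS (Xs k) (interS (xi k) (xi n))) ->
       IPS theta X /\ (forall n, restrS X (xi n) = Xs n))
    /\
    ((forall k n, k <> n -> forall t, ~ (xi k t /\ xi n t)) ->
       (forall k n, restrS (Xs n) (interS (xi k) (xi n))
                    = restrS (Xs k) (interS (xi k) (xi n))) /\
       IPS theta X /\ (forall n, restrS X (xi n) = Xs n)).
Proof.
  intros xi Xs xi_Xi Xs_IPS theta X.
  destruct (choice _ Xs_IPS) as [phi hphi].
  assert (glued : (forall k n, restrS (Xs n) (interS (xi k) (xi n))
                               = restrS (Xs k) (interS (xi k) (xi n))) ->
                  IPS theta X /\ (forall n, restrS X (xi n) = Xs n)).
  { intro coherent. split.
    - exact (Xglued_IPS xi Xs phi xi_Xi (fun n => proj1 (hphi n)) (fun n => proj2 (hphi n))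
               coherent).
    - exact (restrS_Xglued xi Xs phi xi_Xi (fun n => proj1 (hphi n)) (fun n => proj2 (hphi n))
               coherent). }
  split; [exact glued|]. intro disjoint.
  assert (coherent := coherent_of_disjoint xi Xs (fun n => IPS_nonempty _ _ (Xs_IPS n)) disjoint).
  split; [exact coherent|]. exact (glued coherent).
Qed.
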